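(* For every $n\ge 2$ there is a finite poset $P$ excluding $\mathbf{3}+\mathbf{3}$ such that $\dim(P)\ge n$ and every convex subposet $Q$ of $P$ satisfies $\dim(Q)\le h(Q)+1$, where $h(Q)$ denotes the height of $Q$.
   Context: $\mathbf{3}+\mathbf{3}$ is the disjoint union of two $3$-element chains with all points of one incomparable to all points of the other; $P$ excludes it if no subposet is isomorphic to it. A subposet $Q$ is convex if $x,z\in Q$ and $x<y<z$ imply $y\in Q$. $\dim$ denotes the Dushnik–Miller dimension. *)

From mathcomp Require Import all_boot.
Set Implicit Arguments. Unset Strict Implicit. Unset Printing Implicit Defensive.

Definition is_poset (T : finType) (le : rel T) : Prop :=
  [/\ reflexive le, antisymmetric le & transitive le].

Definition le33 : rel (bool * 'I_3) :=
  fun u v => (u.1 == v.1) && (u.2 <= v.2)%N.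

Definition excludes_3_3 (T : finType) (le : rel T) : Prop :=
  ~ exists f : bool * 'I_3 -> T,
      injective f /\ forall u v, le (f u) (f v) = le33 u v.

Definition convex (T : finType) (le : rel T) (Q : {set T}) : Prop :=
  forall x y z, x \in Q -> z \in Q -> le x y -> le y z -> y \in Q.

Definition linear_ext (T : finType) (le : rel T) (Q : {set T}) (L : rel T) : Prop :=
  [/\ {in Q, reflexive L},
      {in Q &, antisymmetric L},
      {in Q & &, transitive L},
      {in Q &, total L} &
      {in Q &, forall x y, le x y -> L x y}].

Definition realizer (T : finType) (le : rel T) (Q : {set T}) (d : nat)
  (L : 'I_d -> rel T) : Prop :=
  (forall i, linear_ext le Q (L i)) /\
  {in Q &, forall x y, le x y <-> (forall i, L i x y)}.

Definition dim_le (T : finType) (le : rel T) (Q : {set T}) (d : nat) : Prop :=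
  exists L : 'I_d -> rel T, realizer le Q L.

Definition chain (T : finType) (le : rel T) (C : {set T}) : bool :=
  [forall x in C, forall y in C, le x y || le y x].

Definition height (T : finType) (le : rel T) (Q : {set T}) : nat :=
  \max_(C : {set T} | (C \subset Q) && chain le C) #|C|.

From mathcomp Require Import all_boot zify.
Set Implicit Arguments. Unset Strict Implicit. Unset Printing Implicit Defensive.

(* The poset is the standard example a_i < b_j (i <> j, 0 <= i, j <= N), which forces
   dimension N + 1, threaded by a chain c_0 < ... < c_N with a_i < c_j for i <= j and
   c_i < b_j for i < j.  The middle of every 3-element chain is some c_i, and the c_i are
   pairwise comparable, so 3 + 3 is excluded.  Two linear extensions reverse every
   incomparable pair except the critical pairs (a_t, b_t), and one more extension per t
   reverses (a_t, b_t).  If p is the least index of a critical pair inside a convex Q,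
   then Q contains a_p < c_p < ... < c_(t-1) < b_t for every other critical index t, so
   only t <= p + h(Q) - 2 occur and h(Q) + 1 extensions suffice. *)

Section Generic.
Variables (T : finType) (le : rel T).

Lemma dim_le_ranks (Q : {set T}) d (rank : 'I_d -> T -> nat) :
  (forall i, injective (rank i)) ->
  (forall i x y, le x y -> rank i x <= rank i y) ->
  {in Q &, forall x y, ~~ le x y -> exists i, rank i y < rank i x} ->
  dim_le le Q d.
Proof.
move=> rank_inj rank_mono rank_rev.
exists (fun i x y => rank i x <= rank i y); split=> [i|x y xQ yQ].
  split=> [x _ // | x y _ _ | y x z _ _ _ | x y _ _ | x y _ _ /rank_mono //].
  - by move=> /anti_leq /rank_inj.
  - exact: leq_trans.
  - exact: leq_total.
split=> [xy i|all_le]; first exact: rank_mono.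
apply/negPn/negP => /(rank_rev x y xQ yQ) [i].
by rewrite ltnNge all_le.
Qed.

(* A realizer must reverse each pair (a t, b t) in a different extension. *)
Lemma standard_example_le_dim (Q : {set T}) n (a b : 'I_n -> T) d :
  (forall t, a t \in Q) -> (forall t, b t \in Q) ->
  (forall s t, s != t -> le (a s) (b t)) -> (forall t, ~~ le (a t) (b t)) ->
  dim_le le Q d -> n <= d.
Proof.
move=> aQ bQ le_ab nle_ab [L [L_ext L_real]].
have /fin_all_exists [g gP] t : exists i, ~~ L i (a t) (b t).
  apply/existsP; rewrite -negb_forall; apply: contra (nle_ab t) => /forallP.
  exact: (L_real _ _ (aQ t) (bQ t)).2.
suff /leq_card : injective g by rewrite !card_ord.
move=> s t gst; apply/eqP; apply: contraT => neq_st.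
have [_ _ L_tr L_tot _] := L_ext (g t).
have ba_s : L (g t) (b s) (a s).
  by move: (L_tot _ _ (aQ s) (bQ s)) (gP s); rewrite gst => /orP [->|].
have ab_st : L (g t) (a s) (b t) by apply: (L_real _ _ (aQ s) (bQ t)).1; apply: le_ab.
have ab_ts : L (g t) (a t) (b s) by apply: (L_real _ _ (aQ t) (bQ s)).1; rewrite le_ab // eq_sym.
have ab_tt : L (g t) (a t) (b t).
  exact: L_tr (bQ s) (aQ t) (bQ t) ab_ts (L_tr _ _ _ (aQ s) (bQ s) (bQ t) ba_s ab_st).
by move: (gP t); rewrite ab_tt.
Qed.

Lemma chain_card_le_height (Q C : {set T}) :
  C \subset Q -> chain le C -> #|C| <= height le Q.
Proof. by move=> CQ chC; apply: (leq_bigmax_cond (F := fun C : {set T} => #|C|)); rewrite CQ chC. Qed.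

Lemma card_pair_le_height (Q : {set T}) x y :
  reflexive le -> x \in Q -> y \in Q -> le x y -> #|[set x; y]| <= height le Q.
Proof.
move=> le_refl xQ yQ le_xy; apply: chain_card_le_height.
  by apply/subsetP => u; rewrite !inE => /orP [] /eqP ->.
apply/forall_inP => u; rewrite !inE => /orP [] /eqP ->;
  apply/forall_inP => v; rewrite !inE => /orP [] /eqP ->;
  by rewrite ?le_refl ?le_xy ?orbT.
Qed.

Lemma monotone_chain_le_height (Q : {set T}) k (f : 'I_k -> T) :
  injective f -> (forall i j : 'I_k, i <= j -> le (f i) (f j)) -> (forall i, f i \in Q) ->
  k <= height le Q.
Proof.
move=> f_inj f_mono fQ; rewrite -[k]card_ord -(card_imset _ f_inj).
apply: chain_card_le_height.
  by apply/subsetP => _ /imsetP [i _ ->].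
apply/forall_inP => _ /imsetP [i _ ->]; apply/forall_inP => _ /imsetP [j _ ->].
by case: (leqP i j) => [/f_mono -> // | /ltnW /f_mono ->]; rewrite orbT.
Qed.

Lemma excludes_3_3_chain_middles (M : pred T) :
  (forall x y z, x != y -> y != z -> le x y -> le y z -> M y) ->
  {in M &, forall x y, le x y || le y x} -> excludes_3_3 le.
Proof.
move=> middle_in_M M_chain [f [f_inj f_le]].
have f_neq u v : u != v -> f u != f v by apply: contra => /eqP /f_inj ->.
have M_mid c : M (f (c, @Ordinal 3 1 isT)).
  by apply: (middle_in_M (f (c, @Ordinal 3 0 isT)) _ (f (c, @Ordinal 3 2 isT)));
    rewrite ?f_le /le33 ?eqxx //; apply: f_neq; rewrite xpair_eqE eqxx.
by have := M_chain _ _ (M_mid true) (M_mid false); rewrite !f_le.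
Qed.

End Generic.

Section Construction.
Variable N : nat.

(* Kind 0, 1, 2 at position i stands for a_i, c_i, b_i, with 0 <= i <= N. *)
Definition elt : finType := ('I_3 * 'I_N.+1)%type.
Definition kind (x : elt) : nat := x.1.
Definition pos (x : elt) : nat := x.2.

Lemma kind_lt3 x : kind x < 3. Proof. exact: ltn_ord. Qed.
Lemma pos_ltS x : pos x < N.+1. Proof. exact: ltn_ord. Qed.

Lemma elt_eq x y : kind x = kind y -> pos x = pos y -> x = y.
Proof. by case: x y => [k i] [l j]; rewrite /kind /pos /= => /val_inj -> /val_inj ->. Qed.

Lemma elt_neq x y : (x != y) = (kind x != kind y) || (pos x != pos y).
Proof.
case: (eqVneq x y) => [-> | neq_xy] /=; first by rewrite !eqxx.
apply/esym; rewrite -negb_and; move: neq_xy; apply: contraNN => /andP [/eqP kxy /eqP pxy].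
by rewrite (elt_eq kxy pxy).
Qed.

Definition pt (k i : nat) : elt := (inord k, inord i).
Definition lower (i : nat) : elt := pt 0 i.
Definition upper (i : nat) : elt := pt 2 i.

Lemma kind_pt k i : k < 3 -> kind (pt k i) = k.
Proof. exact: inordK. Qed.
Lemma pos_pt k i : i < N.+1 -> pos (pt k i) = i.
Proof. exact: inordK. Qed.
Lemma pt_kind_pos x : pt (kind x) (pos x) = x.
Proof. by apply: elt_eq; rewrite ?kind_pt ?pos_pt ?kind_lt3 ?pos_ltS. Qed.

Definition le_elt : rel elt := fun x y =>
  if kind x == 0 then
    if kind y == 0 then pos x == pos y
    else if kind y == 1 then pos x <= pos y
    else pos x != pos y
  else if kind x == 1 then
    if kind y == 0 then false
    else if kind y == 1 then pos x <= pos y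
    else pos x < pos y
  else (kind y == 2) && (pos x == pos y).

Ltac coords x := have := kind_lt3 x; have := pos_ltS x; move: (kind x) (pos x) => ? ? ? ?.
Ltac case_lia := repeat (case: ifP => ? /=); lia.

Lemma le_elt_poset : is_poset le_elt.
Proof.
split=> [x | x y | y x z]; rewrite /le_elt.
- by coords x; case_lia.
- by move=> le_xy; apply: elt_eq; move: le_xy; coords x; coords y; case_lia.
- by coords x; coords y; coords z; case_lia.
Qed.

Lemma le_lower_upper s t : s < N.+1 -> t < N.+1 -> le_elt (lower s) (upper t) = (s != t).
Proof. by move=> ltsN lttN; rewrite /le_elt !kind_pt // !pos_pt. Qed.

Lemma le_lower_or_upper p x : p < N.+1 -> le_elt (lower p) x || le_elt x (upper p).
Proof. by move=> ltpN; rewrite /le_elt !kind_pt // !pos_pt //; coords x; case_lia. Qed.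

Lemma middle_kind1 x y z : x != y -> y != z -> le_elt x y -> le_elt y z -> kind y == 1.
Proof. by rewrite !elt_neq /le_elt; coords x; coords y; coords z; case_lia. Qed.

Lemma kind1_total : {in [pred x | kind x == 1] &, total le_elt}.
Proof. by move=> x y; rewrite !inE /le_elt; coords x; coords y; case_lia. Qed.

(* As linear orders, code 0 is a_0 c_0 a_1 c_1 ... a_N c_N b_N ... b_0, code 1 is
   a_N ... a_0 b_0 c_0 b_1 c_1 ... b_N c_N, and code t+2 lists the a_i (i != t),
   c_0 ... c_(t-1), b_t, a_t, c_t ... c_N and then the other b_i. *)
Definition ext_rank (code : nat) (x : elt) : nat :=
  match code with
  | 0 => if kind x == 0 then 2 * pos x else if kind x == 1 then (2 * pos x).+1
         else 3 * N.+1 - pos x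
  | 1 => if kind x == 0 then N.+1 - pos x else if kind x == 1 then N.+1 + 2 + 2 * pos x
         else N.+1 + 1 + 2 * pos x
  | t.+2 => if kind x == 0 then (if pos x == t then N.+1 + t + 1 else pos x)
            else if kind x == 1 then (if pos x < t then N.+1 + pos x else N.+1 + pos x + 2)
            else (if pos x == t then N.+1 + t else 2 * N.+1 + 2 + pos x)
  end.

Lemma ext_rank_inj code : injective (ext_rank code).
Proof.
by move=> x y; case: code => [|[|t]] /= e; apply: elt_eq; move: e; coords x; coords y; case_lia.
Qed.

Lemma ext_rank_mono code x y : le_elt x y -> ext_rank code x <= ext_rank code y.
Proof. by rewrite /le_elt; case: code => [|[|t]] /=; coords x; coords y; case_lia. Qed.

Definition critical (x y : elt) : bool := [&& kind x == 0, kind y == 2 & pos x == pos y].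

Lemma criticalP x y : critical x y -> x = lower (pos x) /\ y = upper (pos x).
Proof.
by case/and3P => /eqP kx /eqP ky /eqP pxy;
  rewrite -{1}[x]pt_kind_pos -{1}[y]pt_kind_pos kx ky pxy.
Qed.

Lemma not_le_elt_reversed x y : ~~ le_elt x y ->
  [|| critical x y, ext_rank 0 y < ext_rank 0 x | ext_rank 1 y < ext_rank 1 x].
Proof. by rewrite /le_elt /critical /=; coords x; coords y; case_lia. Qed.

Lemma ext_rank_swap t : t < N.+1 -> ext_rank t.+2 (upper t) < ext_rank t.+2 (lower t).
Proof. by move=> lttN; rewrite /= !kind_pt // !pos_pt // /= eqxx; lia. Qed.

Lemma dim_elt_ge d : dim_le le_elt [set: elt] d -> N.+1 <= d.
Proof.
apply: (standard_example_le_dim (a := fun t : 'I_N.+1 => lower t) (b := fun t => upper t)).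
- by move=> t; rewrite inE.
- by move=> t; rewrite inE.
- by move=> s t; rewrite le_lower_upper.
- by move=> t; rewrite le_lower_upper // eqxx.
Qed.

Lemma excludes_3_3_elt : excludes_3_3 le_elt.
Proof. exact: (excludes_3_3_chain_middles middle_kind1 kind1_total). Qed.

(* a_p < c_p < c_(p+1) < ... < c_(t-1) < b_t, indexed by j = 0, ..., t - p + 1 *)
Definition chain_pt (p t j : nat) : elt :=
  pt (if j == 0 then 0 else if j == (t - p).+1 then 2 else 1)
     (if j == 0 then p else if j == (t - p).+1 then t else (p + j).-1).

Lemma kind_chain_pt p t j :
  kind (chain_pt p t j) = if j == 0 then 0 else if j == (t - p).+1 then 2 else 1.
Proof. by rewrite kind_pt //; case: ifP => //; case: ifP. Qed.

Lemma pos_chain_pt p t j : p < t -> t < N.+1 -> j < (t - p).+2 ->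
  pos (chain_pt p t j) = if j == 0 then p else if j == (t - p).+1 then t else (p + j).-1.
Proof. by move=> ltpt lttN ltj; rewrite pos_pt //; case: ifP => ?; [lia | case: ifP => ?; lia]. Qed.

Lemma le_chain_pt p t a b : p < t -> t < N.+1 -> a < (t - p).+2 -> b < (t - p).+2 ->
  le_elt (chain_pt p t a) (chain_pt p t b) = (a <= b).
Proof.
move=> ltpt lttN lta ltb; rewrite /le_elt !kind_chain_pt !pos_chain_pt //.
by case: (a =P 0); case: (a =P (t - p).+1); case: (b =P 0); case: (b =P (t - p).+1) => * /=;
  case_lia.
Qed.

Lemma convex_critical_span (Q : {set elt}) p t : convex le_elt Q -> p < t -> t < N.+1 ->
  lower p \in Q -> upper t \in Q -> (t - p).+2 <= height le_elt Q.
Proof.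
move=> convQ ltpt lttN lowQ upQ; set f := fun j : 'I_(t - p).+2 => chain_pt p t j.
have f_le i j : le_elt (f i) (f j) = (i <= j) by rewrite le_chain_pt.
apply: (monotone_chain_le_height (f := f)) => [i j fij | i j | j]; rewrite ?f_le //.
  by apply/val_inj/eqP; rewrite eqn_leq -!f_le fij f_le leqnn.
have f0 : f ord0 = lower p by [].
have flast : f ord_max = upper t by rewrite /f /chain_pt /= eqxx.
by apply: (convQ (f ord0) _ (f ord_max)); [rewrite f0 | rewrite flast | rewrite f_le ..];
  rewrite ?leq_ord.
Qed.

Definition has_critical (Q : {set elt}) (t : nat) : bool :=
  [&& t < N.+1, lower t \in Q & upper t \in Q].

Lemma height_ge1 (Q : {set elt}) x : x \in Q -> 1 <= height le_elt Q.
Proof.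
move=> xQ; have [le_refl _ _] := le_elt_poset.
by have := card_pair_le_height le_refl xQ xQ (le_refl x); rewrite cards2 eqxx.
Qed.

Lemma dim_convex_no_critical (Q : {set elt}) : (forall t : 'I_N.+1, ~~ has_critical Q t) ->
  dim_le le_elt Q (height le_elt Q).+1.
Proof.
move=> no_crit; apply: (dim_le_ranks (rank := fun i : 'I_(height le_elt Q).+1 => ext_rank (minn i 1))).
- by move=> i; apply: ext_rank_inj.
- by move=> i; apply: ext_rank_mono.
move=> x y xQ yQ /not_le_elt_reversed /or3P [/criticalP [ex ey] | rev0 | rev1].
- case/negP: (no_crit (Ordinal (pos_ltS x))).
  by rewrite /has_critical /= pos_ltS -ex -ey xQ yQ.
- by exists ord0.
- by exists (Ordinal (leq_ltn_trans (height_ge1 xQ) (ltnSn _))).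
Qed.

Lemma dim_convex_critical (Q : {set elt}) p : convex le_elt Q -> has_critical Q p ->
  (forall t, has_critical Q t -> p <= t) -> 2 <= height le_elt Q ->
  dim_le le_elt Q (height le_elt Q).+1.
Proof.
move=> convQ crit_p p_min h_ge2; set h := height le_elt Q.
apply: (dim_le_ranks (rank := fun i : 'I_h.+1 => ext_rank (if i < 2 then val i else p + i))).
- by move=> i; apply: ext_rank_inj.
- by move=> i; apply: ext_rank_mono.
move=> x y xQ yQ /not_le_elt_reversed /or3P [/criticalP [ex ey] | rev0 | rev1].
- set t := pos x; have crit_t : has_critical Q t by rewrite /has_critical pos_ltS -ex -ey xQ yQ.
  have span : (t - p).+2 <= h.
    case/andP: crit_p => ltpN /andP [lowQ _].
    case: (ltngtP p t) (p_min _ crit_t) => // [ltpt | <-] _; last by rewrite subnn.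
    by apply: convex_critical_span; rewrite ?pos_ltS -?ey.
  exists (Ordinal (span : (t - p).+2 < h.+1)) => /=.
  have -> : p + (t - p).+2 = t.+2 by have := p_min _ crit_t; lia.
  by rewrite ex ey; apply: ext_rank_swap; rewrite pos_ltS.
- by exists ord0.
- by exists (Ordinal (leqW h_ge2)).
Qed.

Lemma dim_convex_critical_antichain (Q : {set elt}) p : has_critical Q p ->
  height le_elt Q <= 1 -> dim_le le_elt Q (height le_elt Q).+1.
Proof.
case/and3P=> ltpN lowQ upQ h_le1; have [le_refl _ _] := le_elt_poset.
have comparable_eq x y : x \in Q -> y \in Q -> le_elt x y -> x = y.
  move=> xQ yQ le_xy; move: (leq_trans (card_pair_le_height le_refl xQ yQ le_xy) h_le1).
  by rewrite cards2; case: eqVneq.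
have Q_pair x : x \in Q -> x = lower p \/ x = upper p.
  move=> xQ; case/orP: (le_lower_or_upper x ltpN) => le_x.
    by left; apply/esym/comparable_eq.
  by right; apply: comparable_eq.
have -> : height le_elt Q = 1 by apply/anti_leq; rewrite h_le1 (height_ge1 lowQ).
apply: (dim_le_ranks (rank := fun i : 'I_2 => ext_rank (if i == 0 :> nat then 0 else p.+2))).
- by move=> i; apply: ext_rank_inj.
- by move=> i; apply: ext_rank_mono.
move=> x y /Q_pair [] -> /Q_pair [] ->; rewrite ?le_refl // => _.
- by exists (Ordinal (isT : 1 < 2)); apply: ext_rank_swap.
- by exists ord0; rewrite /= !kind_pt // !pos_pt //=; lia.
Qed.

Lemma dim_convex (Q : {set elt}) : convex le_elt Q -> dim_le le_elt Q (height le_elt Q).+1.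
Proof.
move=> convQ; case: (boolP [exists t : 'I_N.+1, has_critical Q t]) => [/existsP [t crit_t]|].
  have [p crit_p p_min] := ex_minnP (ex_intro (has_critical Q) _ crit_t).
  case: (leqP 2 (height le_elt Q)) => [h_ge2 | h_le1].
    exact: dim_convex_critical convQ crit_p p_min h_ge2.
  exact: dim_convex_critical_antichain crit_p h_le1.
by move/existsPn; apply: dim_convex_no_critical.
Qed.

End Construction.

Theorem proposition9 (n : nat) (hn : 2 <= n) :
  exists (T : finType) (le : rel T),
    [/\ is_poset le,
        excludes_3_3 le,
        (* dim(P) >= n : no realizer of P with fewer than n linear extensions *)
        (forall d, dim_le le [set: T] d -> n <= d) &
        (forall Q : {set T}, convex le Q -> dim_le le Q (height le Q).+1)].
Proof.
case: n hn => // n _.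
exists (elt n), (@le_elt n); split.
- exact: le_elt_poset.
- exact: excludes_3_3_elt.
- exact: dim_elt_ge.
- exact: dim_convex.
Qed.
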